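(* In iTML, suppose $T :: \rho,\mu_1,M \Rightarrow \mu_2,R$ and $x, x' \sqsubseteq (\rho,\mu_1,M,T)$. Then $\mathsf{fwd}_T(x \sqcap x') = \mathsf{fwd}_T(x) \sqcap \mathsf{fwd}_T(x')$, where $\mathsf{fwd}_T : \mathrm{Prefix}(\rho,\mu_1,M,T) \to \mathrm{Prefix}(\mu_2,R)$ sends each $(\rho',\mu',M',T')$ to the unique $(\mu'',R'')$ with $\rho',\mu',M',T' \nearrow \mu'',R''$.
   Context: Partial syntax of iTML ($\Box$ a hole). Expressions $e ::= x \mid () \mid \mathsf{inl}\,e \mid \mathsf{inr}\,e \mid (e_1,e_2) \mid \mathsf{fst}\,e \mid \mathsf{snd}\,e \mid \mathsf{fun}\,f(x).M \mid \Box$. Computations $M ::= \mathsf{return}\,e \mid \mathsf{let}\,x = M_1\,\mathsf{in}\,M_2 \mid e_1\,e_2 \mid \mathsf{case}\,e\,\mathsf{of}\,\{\mathsf{inl}\,x \to M_1; \mathsf{inr}\,y \to M_2\} \mid \mathsf{raise}\,e \mid \mathsf{try}\,M_1\,\mathsf{with}\,x \to M_2 \mid \mathsf{ref}\,e \mid e_1 := e_2 \mid !e \mid \Box$. Values $v ::= () \mid \mathsf{inl}\,v \mid \mathsf{inr}\,v \mid (v_1,v_2) \mid \langle\rho,\mathsf{fun}\,f(x).M\rangle \mid \ell \mid \Box$. Environments $\rho$ / stores $\mu$: finitely supported maps from variables / locations to values, regarded as total with value $\Box$ off their domain; $\rho[x\mapsto v]$ extends, $\mu[\ell\mapsto v]$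 updates. Outcomes $k ::= \mathsf{val}\mid\mathsf{exn}$; results $R ::= k\,v$. Traces $T ::= \mathsf{return}\,e \mid \mathsf{let_F}(T) \mid \mathsf{let_S}(T_1,x.T_2) \mid \mathsf{app}(e_1,e_2,f.x.T) \mid \mathsf{caseL}(e,x.T,y) \mid \mathsf{caseR}(e,x,y.T) \mid \mathsf{raise}\,e \mid \mathsf{try_S}(T) \mid \mathsf{try_F}(T_1,x.T_2) \mid \mathsf{ref}_\ell\,e \mid e_1:=_\ell e_2 \mid !_\ell\,e \mid \Box^k_{\mathcal{L}}$ ($\mathcal{L}$ a finite set of locations). $\mathsf{writes}(T)$: $\mathcal{L}$ for $\Box^k_{\mathcal{L}}$; $\emptyset$ for $\mathsf{return}\,e,\mathsf{raise}\,e,!_\ell e$; $\{\ell\}$ for $\mathsf{ref}_\ell e$, $e_1:=_\ell e_2$; union of both subtraces for $\mathsf{let_S}$, $\mathsf{try_F}$; that of the unique subtrace for $\mathsf{let_F},\mathsf{try_S},\mathsf{app},\mathsf{caseL},\mathsf{caseR}$. $\mathsf{outcome}(T)$: $k$ for $\Box^k_{\mathcal{L}}$; $\mathsf{val}$ for $\mathsf{return},\mathsf{try_S},\mathsf{ref}_\ell,:=_\ell,!_\ell$; $\mathsf{exn}$ for $\mathsf{let_F},\mathsf{raise}$; outcome of $T_2$ for $\mathsf{let_S}(T_1,x.T_2),\mathsf{try_F}(T_1,x.T_2)$; outcome of the subtrace for $\mathsf{app},\mathsf{caseL},\mathsf{caseR}$. Order $\sqsubseteq$: on expressions, computations, values the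 least order with $\Box\sqsubseteq t$ closed under constructors componentwise; $k\,v\sqsubseteq k\,v'$ iff $v\sqsubseteq v'$ (same $k$); pointwise on environments and stores; on traces the least order containing $\Box^k_{\mathcal{L}}\sqsubseteq T$ whenever $\mathsf{writes}(T)=\mathcal{L}$ and $\mathsf{outcome}(T)=k$, closed under trace constructors componentwise; componentwise on tuples. $\mathrm{Prefix}(t)=\{t'\mid t'\sqsubseteq t\}$ (a lattice; $\sqcap$ is the meet). Store erasure: $\mu\triangleleft\mathcal{L}$ is $\mu$ with every $\ell\in\mathcal{L}$ mapped to $\Box$. Evaluation (hole-free): $\rho,x\Rightarrow\rho(x)$; $()\Rightarrow()$; $\mathsf{fun}\,f(x).M\Rightarrow\langle\rho,\mathsf{fun}\,f(x).M\rangle$; $\mathsf{inl},\mathsf{inr}$, pairs componentwise; $\mathsf{fst},\mathsf{snd}$ project. $\mathsf{return}\,e::\rho,\mu,\mathsf{return}\,e\Rightarrow\mu,\mathsf{val}\,v$ if $\rho,e\Rightarrow v$; $\mathsf{app}(e_1,e_2,f.x.T)::\rho,\mu,e_1\,e_2\Rightarrow\mu',R$ if $\rho,e_1\Rightarrow v_1=\langle\rho',\mathsf{fun}\,f(x).M\rangle$, $\rho,e_2\Rightarrow v_2$, $T::\rho'[f\mapsto v_1][x\mapsto v_2],\mu,M\Rightarrow\mu',R$; $\mathsf{raise}\,e::\rho,\mu,\mathsf{raise}\,e\Rightarrow\mu,\mathsf{exn}\,v$ if $\rho,e\Rightarrow v$; $\mathsf{ref}_\ell\,e::\rho,\mu,\mathsf{ref}\,e\Rightarrow\mu[\ell\mapsto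 v],\mathsf{val}\,\ell$ if $\rho,e\Rightarrow v$, $\ell\notin\mathrm{dom}\,\mu$; $e_1:=_\ell e_2::\rho,\mu,e_1:=e_2\Rightarrow\mu[\ell\mapsto v],\mathsf{val}\,()$ if $\rho,e_1\Rightarrow\ell$, $\rho,e_2\Rightarrow v$; $!_\ell e::\rho,\mu,!e\Rightarrow\mu,\mathsf{val}\,\mu(\ell)$ if $\rho,e\Rightarrow\ell\in\mathrm{dom}\,\mu$; $\mathsf{let_S}(T_1,x.T_2)::\rho,\mu,\mathsf{let}\,x=M_1\,\mathsf{in}\,M_2\Rightarrow\mu'',R$ if $T_1::\rho,\mu,M_1\Rightarrow\mu',\mathsf{val}\,v$ and $T_2::\rho[x\mapsto v],\mu',M_2\Rightarrow\mu'',R$; $\mathsf{let_F}(T)::\ldots\Rightarrow\mu',\mathsf{exn}\,v$ if $T::\rho,\mu,M_1\Rightarrow\mu',\mathsf{exn}\,v$; $\mathsf{try_F}(T_1,x.T_2)::\rho,\mu,\mathsf{try}\,M_1\,\mathsf{with}\,x\to M_2\Rightarrow\mu'',R$ if $T_1::\rho,\mu,M_1\Rightarrow\mu',\mathsf{exn}\,v$, $T_2::\rho[x\mapsto v],\mu',M_2\Rightarrow\mu'',R$; $\mathsf{try_S}(T_1)::\ldots\Rightarrow\mu',\mathsf{val}\,v$ if $T_1::\rho,\mu,M_1\Rightarrow\mu',\mathsf{val}\,v$; $\mathsf{caseL}(e,x.T,y)::\rho,\mu,\mathsf{case}\,e\,\mathsf{of}\{\mathsf{inl}\,x\to M_1;\mathsf{inr}\,y\to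 M_2\}\Rightarrow\mu',R$ if $\rho,e\Rightarrow\mathsf{inl}\,v$, $T::\rho[x\mapsto v],\mu,M_1\Rightarrow\mu',R$; symmetrically $\mathsf{caseR}(e,x,y.T)$. Expression forward slicing $\rho,e\nearrow v$: $\rho,\Box\nearrow\Box$; $\rho,x\nearrow\rho(x)$; $()\nearrow()$; $\mathsf{fun}\,f(x).M\nearrow\langle\rho,\mathsf{fun}\,f(x).M\rangle$; $\mathsf{inl},\mathsf{inr}$, pairs componentwise; $\mathsf{fst}\,e\nearrow v_1$, $\mathsf{snd}\,e\nearrow v_2$ if $e\nearrow(v_1,v_2)$; both $\nearrow\Box$ if $e\nearrow\Box$. Computation forward slicing $\rho,\mu,M,T\nearrow\mu',R$: (F-Trace$\Box$) $\rho,\mu,M,\Box^k_{\mathcal{L}}\nearrow\mu\triangleleft\mathcal{L},k\,\Box$. (F-Comp$\Box$) $\rho,\mu,\Box,T\nearrow\mu\triangleleft\mathsf{writes}(T),\mathsf{outcome}(T)\,\Box$. (F-Ret) $\rho,e\nearrow v$ ⟹ $\rho,\mu,\mathsf{return}\,e,\mathsf{return}\,e'\nearrow\mu,\mathsf{val}\,v$. (F-Let) $\rho,\mu,M_1,T_1\nearrow\mu',\mathsf{val}\,v$, $\rho[x\mapsto v],\mu',M_2,T_2\nearrow\mu'',R$ ⟹ $\rho,\mu,\mathsf{let}\,x=M_1\,\mathsf{in}\,M_2,\mathsf{let_S}(T_1,x.T_2)\nearrow\mu'',R$. (F-LetFail) $\rho,\mu,M_1,T_1\nearrow\mu',\mathsf{exn}\,v$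 ⟹ $\rho,\mu,\mathsf{let}\,x=M_1\,\mathsf{in}\,M_2,\mathsf{let_F}(T_1)\nearrow\mu',\mathsf{exn}\,v$. (F-CaseL) $\rho,e\nearrow\mathsf{inl}\,v$, $\rho[x\mapsto v],\mu,M_1,T\nearrow\mu',R$ ⟹ $\rho,\mu,\mathsf{case}\,e\,\mathsf{of}\{\mathsf{inl}\,x\to M_1;\mathsf{inr}\,y\to M_2\},\mathsf{caseL}(e',x.T,y)\nearrow\mu',R$; (F-CaseR) symmetric. (F-CaseL$\Box$/F-CaseR$\Box$) $\rho,e\nearrow\Box$ ⟹ case computation with trace $\mathsf{caseL}(e',x.T,y)$ (resp. $\mathsf{caseR}(e',x,y.T)$) $\nearrow\mu\triangleleft\mathsf{writes}(T),\mathsf{outcome}(T)\,\Box$. (F-App) $\rho,e_1\nearrow v_1=\langle\rho',\mathsf{fun}\,f(x).M\rangle$, $\rho,e_2\nearrow v_2$, $\rho'[f\mapsto v_1][x\mapsto v_2],\mu,M,T\nearrow\mu',R$ ⟹ $\rho,\mu,e_1\,e_2,\mathsf{app}(e_1',e_2',f.x.T)\nearrow\mu',R$. (F-App$\Box$) $\rho,e_1\nearrow\Box$ ⟹ $\rho,\mu,e_1\,e_2,\mathsf{app}(e_1',e_2',f.x.T)\nearrow\mu\triangleleft\mathsf{writes}(T),\mathsf{outcome}(T)\,\Box$. (F-Raise) $\rho,e\nearrow v$ ⟹ $\rho,\mu,\mathsf{raise}\,e,\mathsf{raise}\,e'\nearrow\mu,\mathsf{exn}\,v$. (F-Try) $\rho,\mu,M_1,T_1\nearrow\mu',\mathsf{val}\,v$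 ⟹ $\rho,\mu,\mathsf{try}\,M_1\,\mathsf{with}\,x\to M_2,\mathsf{try_S}(T_1)\nearrow\mu',\mathsf{val}\,v$. (F-TryFail) $\rho,\mu,M_1,T_1\nearrow\mu',\mathsf{exn}\,v$, $\rho[x\mapsto v],\mu',M_2,T_2\nearrow\mu'',R$ ⟹ $\rho,\mu,\mathsf{try}\,M_1\,\mathsf{with}\,x\to M_2,\mathsf{try_F}(T_1,x.T_2)\nearrow\mu'',R$. (F-Ref) $\rho,e\nearrow v$ ⟹ $\rho,\mu,\mathsf{ref}\,e,\mathsf{ref}_\ell\,e'\nearrow\mu[\ell\mapsto v],\mathsf{val}\,\ell$. (F-Assign) $\rho,e_1\nearrow\ell$, $\rho,e_2\nearrow v$ ⟹ $\rho,\mu,e_1:=e_2,e_1':=_\ell e_2'\nearrow\mu[\ell\mapsto v],\mathsf{val}\,()$. (F-Assign$\Box$) $\rho,e_1\nearrow\Box$ ⟹ $\ldots\nearrow\mu[\ell\mapsto\Box],\mathsf{val}\,\Box$. (F-Deref) $\rho,e\nearrow\ell$ ⟹ $\rho,\mu,!e,!_\ell e'\nearrow\mu,\mathsf{val}\,\mu(\ell)$. (F-Deref$\Box$) $\rho,e\nearrow\Box$ ⟹ $\rho,\mu,!e,!_\ell e'\nearrow\mu,\mathsf{val}\,\Box$. For $T::\rho,\mu_1,M\Rightarrow\mu_2,R$, every element of $\mathrm{Prefix}(\rho,\mu_1,M,T)$ has exactly one $\nearrow$-image, lying in $\mathrm{Prefix}(\mu_2,R)$. *)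

From mathcomp Require Import all_boot finmap.

Set Implicit Arguments.
Unset Strict Implicit.
Unset Printing Implicit Defensive.

Local Open Scope fset_scope.

Definition var := nat.
Definition loc := nat.

Inductive outcome := Val | Exn.

Definition outcome_eqb (a b : outcome) : bool :=
  match a, b with Val, Val | Exn, Exn => true | _, _ => false end.

Inductive expr :=
| EVar (x : var)
| EUnit
| EInl (e : expr)
| EInr (e : expr)
| EPair (e1 e2 : expr)
| EFst (e : expr)
| ESnd (e : expr)
| EFun (f x : var) (M : computation)
| EHole
with computation :=
| CRet (e : expr)
| CLet (x : var) (M1 M2 : computation)
| CApp (e1 e2 : expr)
| CCase (e : expr) (x : var) (M1 : computation) (y : var) (M2 : computation)
| CRaise (e : expr)
| CTry (M1 : computation) (x : var) (M2 : computation)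
| CRef (e : expr)
| CAssign (e1 e2 : expr)
| CDeref (e : expr)
| CHole.

(* Values; environments are total maps var -> value (value \Box off the
   domain), so a closure <rho, fun f(x).M> is VClos rho f x M. *)
Inductive value :=
| VUnit
| VInl (v : value)
| VInr (v : value)
| VPair (v1 v2 : value)
| VClos (rho : var -> value) (f x : var) (M : computation)
| VLoc (l : loc)
| VHole.

Definition env := var -> value.
Definition store := loc -> value.

Definition result := (outcome * value)%type.

Inductive trace :=
| TRet (e : expr)
| TLetF (T : trace)
| TLetS (T1 : trace) (x : var) (T2 : trace)
| TApp (e1 e2 : expr) (f x : var) (T : trace)
| TCaseL (e : expr) (x : var) (T : trace) (y : var)
| TCaseR (e : expr) (x : var) (y : var) (T : trace)
| TRaise (e : expr)
| TTryS (T : trace)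
| TTryF (T1 : trace) (x : var) (T2 : trace)
| TRef (l : loc) (e : expr)
| TAssign (l : loc) (e1 e2 : expr)
| TDeref (l : loc) (e : expr)
| THole (k : outcome) (L : {fset loc}).

Fixpoint writes (T : trace) : {fset loc} :=
  match T with
  | THole _ L => L
  | TRet _ | TRaise _ | TDeref _ _ => fset0
  | TRef l _ | TAssign l _ _ => [fset l]
  | TLetS T1 _ T2 | TTryF T1 _ T2 => writes T1 `|` writes T2
  | TLetF T | TTryS T | TApp _ _ _ _ T | TCaseL _ _ T _ | TCaseR _ _ _ T => writes T
  end.

Fixpoint outcome_of (T : trace) : outcome :=
  match T with
  | THole k _ => k
  | TRet _ | TTryS _ | TRef _ _ | TAssign _ _ _ | TDeref _ _ => Val
  | TLetF _ | TRaise _ => Exn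
  | TLetS _ _ T2 | TTryF _ _ T2 => outcome_of T2
  | TApp _ _ _ _ T | TCaseL _ _ T _ | TCaseR _ _ _ T => outcome_of T
  end.

Definition upd (m : nat -> value) (a : nat) (v : value) : nat -> value :=
  fun b => if b == a then v else m b.

Definition erase (mu : store) (L : {fset loc}) : store :=
  fun l => if l \in L then VHole else mu l.

Fixpoint expr_holefree (e : expr) : Prop :=
  match e with
  | EVar _ | EUnit => True
  | EInl e | EInr e | EFst e | ESnd e => expr_holefree e
  | EPair e1 e2 => expr_holefree e1 /\ expr_holefree e2
  | EFun _ _ M => comp_holefree M
  | EHole => False
  end
with comp_holefree (M : computation) : Prop :=
  match M with
  | CRet e | CRaise e | CRef e | CDeref e => expr_holefree e
  | CLet _ M1 M2 | CTry M1 _ M2 => comp_holefree M1 /\ comp_holefree M2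
  | CApp e1 e2 | CAssign e1 e2 => expr_holefree e1 /\ expr_holefree e2
  | CCase e _ M1 _ M2 => expr_holefree e /\ comp_holefree M1 /\ comp_holefree M2
  | CHole => False
  end.

(* A value is hole-free; inside closure environments an entry \Box means
   "not in the domain". *)
Fixpoint value_holefree (v : value) : Prop :=
  match v with
  | VUnit | VLoc _ => True
  | VInl v | VInr v => value_holefree v
  | VPair v1 v2 => value_holefree v1 /\ value_holefree v2
  | VClos rho _ _ M => (forall y, rho y = VHole \/ value_holefree (rho y))
                       /\ comp_holefree M
  | VHole => False
  end.

Definition map_holefree (m : nat -> value) : Prop :=
  forall a, m a = VHole \/ value_holefree (m a).

Inductive eval_e : env -> expr -> value -> Prop :=
| EV_var rho x : eval_e rho (EVar x) (rho x)
| EV_unit rho : eval_e rho EUnit VUnit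
| EV_fun rho f x M : eval_e rho (EFun f x M) (VClos rho f x M)
| EV_inl rho e v : eval_e rho e v -> eval_e rho (EInl e) (VInl v)
| EV_inr rho e v : eval_e rho e v -> eval_e rho (EInr e) (VInr v)
| EV_pair rho e1 e2 v1 v2 :
    eval_e rho e1 v1 -> eval_e rho e2 v2 -> eval_e rho (EPair e1 e2) (VPair v1 v2)
| EV_fst rho e v1 v2 : eval_e rho e (VPair v1 v2) -> eval_e rho (EFst e) v1
| EV_snd rho e v1 v2 : eval_e rho e (VPair v1 v2) -> eval_e rho (ESnd e) v2.

Inductive eval_c : trace -> env -> store -> computation -> store -> result -> Prop :=
| EV_ret rho mu e v :
    eval_e rho e v -> eval_c (TRet e) rho mu (CRet e) mu (Val, v)
| EV_app rho mu e1 e2 v1 v2 rho' f x M T mu' R :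
    eval_e rho e1 v1 -> v1 = VClos rho' f x M -> eval_e rho e2 v2 ->
    eval_c T (upd (upd rho' f v1) x v2) mu M mu' R ->
    eval_c (TApp e1 e2 f x T) rho mu (CApp e1 e2) mu' R
| EV_raise rho mu e v :
    eval_e rho e v -> eval_c (TRaise e) rho mu (CRaise e) mu (Exn, v)
| EV_ref rho mu e v l :
    eval_e rho e v -> mu l = VHole (* l \notin dom mu *) ->
    eval_c (TRef l e) rho mu (CRef e) (upd mu l v) (Val, VLoc l)
| EV_assign rho mu e1 e2 l v :
    eval_e rho e1 (VLoc l) -> eval_e rho e2 v ->
    eval_c (TAssign l e1 e2) rho mu (CAssign e1 e2) (upd mu l v) (Val, VUnit)
| EV_deref rho mu e l :
    eval_e rho e (VLoc l) -> mu l <> VHole (* l \in dom mu *) ->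
    eval_c (TDeref l e) rho mu (CDeref e) mu (Val, mu l)
| EV_letS rho mu x M1 M2 T1 T2 mu' v mu'' R :
    eval_c T1 rho mu M1 mu' (Val, v) ->
    eval_c T2 (upd rho x v) mu' M2 mu'' R ->
    eval_c (TLetS T1 x T2) rho mu (CLet x M1 M2) mu'' R
| EV_letF rho mu x M1 M2 T mu' v :
    eval_c T rho mu M1 mu' (Exn, v) ->
    eval_c (TLetF T) rho mu (CLet x M1 M2) mu' (Exn, v)
| EV_tryF rho mu x M1 M2 T1 T2 mu' v mu'' R :
    eval_c T1 rho mu M1 mu' (Exn, v) ->
    eval_c T2 (upd rho x v) mu' M2 mu'' R ->
    eval_c (TTryF T1 x T2) rho mu (CTry M1 x M2) mu'' R
| EV_tryS rho mu x M1 M2 T1 mu' v :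
    eval_c T1 rho mu M1 mu' (Val, v) ->
    eval_c (TTryS T1) rho mu (CTry M1 x M2) mu' (Val, v)
| EV_caseL rho mu e x M1 y M2 v T mu' R :
    eval_e rho e (VInl v) -> eval_c T (upd rho x v) mu M1 mu' R ->
    eval_c (TCaseL e x T y) rho mu (CCase e x M1 y M2) mu' R
| EV_caseR rho mu e x M1 y M2 v T mu' R :
    eval_e rho e (VInr v) -> eval_c T (upd rho y v) mu M2 mu' R ->
    eval_c (TCaseR e x y T) rho mu (CCase e x M1 y M2) mu' R.

Inductive eleq : expr -> expr -> Prop :=
| eleq_hole e : eleq EHole e
| eleq_var x : eleq (EVar x) (EVar x)
| eleq_unit : eleq EUnit EUnit
| eleq_inl e e' : eleq e e' -> eleq (EInl e) (EInl e')
| eleq_inr e e' : eleq e e' -> eleq (EInr e) (EInr e')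
| eleq_pair e1 e2 e1' e2' : eleq e1 e1' -> eleq e2 e2' -> eleq (EPair e1 e2) (EPair e1' e2')
| eleq_fst e e' : eleq e e' -> eleq (EFst e) (EFst e')
| eleq_snd e e' : eleq e e' -> eleq (ESnd e) (ESnd e')
| eleq_fun f x M M' : cleq M M' -> eleq (EFun f x M) (EFun f x M')
with cleq : computation -> computation -> Prop :=
| cleq_hole M : cleq CHole M
| cleq_ret e e' : eleq e e' -> cleq (CRet e) (CRet e')
| cleq_let x M1 M2 M1' M2' : cleq M1 M1' -> cleq M2 M2' -> cleq (CLet x M1 M2) (CLet x M1' M2')
| cleq_app e1 e2 e1' e2' : eleq e1 e1' -> eleq e2 e2' -> cleq (CApp e1 e2) (CApp e1' e2')
| cleq_case e x M1 y M2 e' M1' M2' : eleq e e' -> cleq M1 M1' -> cleq M2 M2' ->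
    cleq (CCase e x M1 y M2) (CCase e' x M1' y M2')
| cleq_raise e e' : eleq e e' -> cleq (CRaise e) (CRaise e')
| cleq_try M1 x M2 M1' M2' : cleq M1 M1' -> cleq M2 M2' -> cleq (CTry M1 x M2) (CTry M1' x M2')
| cleq_ref e e' : eleq e e' -> cleq (CRef e) (CRef e')
| cleq_assign e1 e2 e1' e2' : eleq e1 e1' -> eleq e2 e2' -> cleq (CAssign e1 e2) (CAssign e1' e2')
| cleq_deref e e' : eleq e e' -> cleq (CDeref e) (CDeref e').

Inductive vleq : value -> value -> Prop :=
| vleq_hole v : vleq VHole v
| vleq_unit : vleq VUnit VUnit
| vleq_inl v v' : vleq v v' -> vleq (VInl v) (VInl v')
| vleq_inr v v' : vleq v v' -> vleq (VInr v) (VInr v')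
| vleq_pair v1 v2 v1' v2' : vleq v1 v1' -> vleq v2 v2' -> vleq (VPair v1 v2) (VPair v1' v2')
| vleq_clos rho rho' f x M M' :
    (forall y, vleq (rho y) (rho' y)) -> cleq M M' -> vleq (VClos rho f x M) (VClos rho' f x M')
| vleq_loc l : vleq (VLoc l) (VLoc l).

Definition mleq (m m' : nat -> value) : Prop := forall a, vleq (m a) (m' a).

Definition rleq (R R' : result) : Prop := R.1 = R'.1 /\ vleq R.2 R'.2.

Inductive tleq : trace -> trace -> Prop :=
| tleq_hole T : tleq (THole (outcome_of T) (writes T)) T
| tleq_ret e e' : eleq e e' -> tleq (TRet e) (TRet e')
| tleq_letF T T' : tleq T T' -> tleq (TLetF T) (TLetF T')
| tleq_letS T1 x T2 T1' T2' : tleq T1 T1' -> tleq T2 T2' -> tleq (TLetS T1 x T2) (TLetS T1' x T2')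
| tleq_app e1 e2 f x T e1' e2' T' : eleq e1 e1' -> eleq e2 e2' -> tleq T T' ->
    tleq (TApp e1 e2 f x T) (TApp e1' e2' f x T')
| tleq_caseL e x T y e' T' : eleq e e' -> tleq T T' -> tleq (TCaseL e x T y) (TCaseL e' x T' y)
| tleq_caseR e x y T e' T' : eleq e e' -> tleq T T' -> tleq (TCaseR e x y T) (TCaseR e' x y T')
| tleq_raise e e' : eleq e e' -> tleq (TRaise e) (TRaise e')
| tleq_tryS T T' : tleq T T' -> tleq (TTryS T) (TTryS T')
| tleq_tryF T1 x T2 T1' T2' : tleq T1 T1' -> tleq T2 T2' -> tleq (TTryF T1 x T2) (TTryF T1' x T2')
| tleq_ref l e e' : eleq e e' -> tleq (TRef l e) (TRef l e')
| tleq_assign l e1 e2 e1' e2' : eleq e1 e1' -> eleq e2 e2' ->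
    tleq (TAssign l e1 e2) (TAssign l e1' e2')
| tleq_deref l e e' : eleq e e' -> tleq (TDeref l e) (TDeref l e').

Definition config := (env * store * computation * trace)%type.
Definition output := (store * result)%type.

Definition cfg_leq (c c' : config) : Prop :=
  let '(rho, mu, M, T) := c in let '(rho', mu', M', T') := c' in
  mleq rho rho' /\ mleq mu mu' /\ cleq M M' /\ tleq T T'.

Fixpoint emeet (e e' : expr) : expr :=
  match e, e' with
  | EVar x, EVar x' => if x == x' then EVar x else EHole
  | EUnit, EUnit => EUnit
  | EInl a, EInl b => EInl (emeet a b)
  | EInr a, EInr b => EInr (emeet a b)
  | EPair a1 a2, EPair b1 b2 => EPair (emeet a1 b1) (emeet a2 b2)
  | EFst a, EFst b => EFst (emeet a b)
  | ESnd a, ESnd b => ESnd (emeet a b)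
  | EFun f x M, EFun f' x' M' =>
      if (f == f') && (x == x') then EFun f x (cmeet M M') else EHole
  | _, _ => EHole
  end
with cmeet (M M' : computation) : computation :=
  match M, M' with
  | CRet a, CRet b => CRet (emeet a b)
  | CLet x A1 A2, CLet x' B1 B2 =>
      if x == x' then CLet x (cmeet A1 B1) (cmeet A2 B2) else CHole
  | CApp a1 a2, CApp b1 b2 => CApp (emeet a1 b1) (emeet a2 b2)
  | CCase a x A1 y A2, CCase b x' B1 y' B2 =>
      if (x == x') && (y == y') then CCase (emeet a b) x (cmeet A1 B1) y (cmeet A2 B2)
      else CHole
  | CRaise a, CRaise b => CRaise (emeet a b)
  | CTry A1 x A2, CTry B1 x' B2 =>
      if x == x' then CTry (cmeet A1 B1) x (cmeet A2 B2) else CHole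
  | CRef a, CRef b => CRef (emeet a b)
  | CAssign a1 a2, CAssign b1 b2 => CAssign (emeet a1 b1) (emeet a2 b2)
  | CDeref a, CDeref b => CDeref (emeet a b)
  | _, _ => CHole
  end.

Fixpoint vmeet (v v' : value) : value :=
  match v, v' with
  | VUnit, VUnit => VUnit
  | VInl a, VInl b => VInl (vmeet a b)
  | VInr a, VInr b => VInr (vmeet a b)
  | VPair a1 a2, VPair b1 b2 => VPair (vmeet a1 b1) (vmeet a2 b2)
  | VClos r f x M, VClos r' f' x' M' =>
      if (f == f') && (x == x')
      then VClos (fun y => vmeet (r y) (r' y)) f x (cmeet M M')
      else VHole
  | VLoc l, VLoc l' => if l == l' then VLoc l else VHole
  | _, _ => VHole
  end.

Definition mmeet (m m' : nat -> value) : nat -> value := fun a => vmeet (m a) (m' a).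

(* Two prefixes of a common trace have the same writes/outcome, so a hole
   prefix is below any other prefix; constructor mismatches (which cannot
   occur between prefixes of a common trace) default to a hole. *)
Fixpoint tmeet (T T' : trace) : trace :=
  let hole := THole (outcome_of T) (writes T) in
  match T, T' with
  | THole k L, _ => THole k L
  | _, THole k L => THole k L
  | TRet a, TRet b => TRet (emeet a b)
  | TLetF A, TLetF B => TLetF (tmeet A B)
  | TLetS A1 x A2, TLetS B1 x' B2 =>
      if x == x' then TLetS (tmeet A1 B1) x (tmeet A2 B2) else hole
  | TApp a1 a2 f x A, TApp b1 b2 f' x' B =>
      if (f == f') && (x == x') then TApp (emeet a1 b1) (emeet a2 b2) f x (tmeet A B)
      else hole
  | TCaseL a x A y, TCaseL b x' B y' =>
      if (x == x') && (y == y') then TCaseL (emeet a b) x (tmeet A B) y else hole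
  | TCaseR a x y A, TCaseR b x' y' B =>
      if (x == x') && (y == y') then TCaseR (emeet a b) x y (tmeet A B) else hole
  | TRaise a, TRaise b => TRaise (emeet a b)
  | TTryS A, TTryS B => TTryS (tmeet A B)
  | TTryF A1 x A2, TTryF B1 x' B2 =>
      if x == x' then TTryF (tmeet A1 B1) x (tmeet A2 B2) else hole
  | TRef l a, TRef l' b => if l == l' then TRef l (emeet a b) else hole
  | TAssign l a1 a2, TAssign l' b1 b2 =>
      if l == l' then TAssign l (emeet a1 b1) (emeet a2 b2) else hole
  | TDeref l a, TDeref l' b => if l == l' then TDeref l (emeet a b) else hole
  | _, _ => hole
  end.

(* results: prefixes of a common result share the outcome k *)
Definition rmeet (R R' : result) : result := (R.1, vmeet R.2 R'.2).

Definition cfg_meet (c c' : config) : config :=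
  let '(rho, mu, M, T) := c in let '(rho', mu', M', T') := c' in
  (mmeet rho rho', mmeet mu mu', cmeet M M', tmeet T T').

Definition out_meet (o o' : output) : output :=
  (mmeet o.1 o'.1, rmeet o.2 o'.2).

Inductive fwd_e : env -> expr -> value -> Prop :=
| FE_hole rho : fwd_e rho EHole VHole
| FE_var rho x : fwd_e rho (EVar x) (rho x)
| FE_unit rho : fwd_e rho EUnit VUnit
| FE_fun rho f x M : fwd_e rho (EFun f x M) (VClos rho f x M)
| FE_inl rho e v : fwd_e rho e v -> fwd_e rho (EInl e) (VInl v)
| FE_inr rho e v : fwd_e rho e v -> fwd_e rho (EInr e) (VInr v)
| FE_pair rho e1 e2 v1 v2 :
    fwd_e rho e1 v1 -> fwd_e rho e2 v2 -> fwd_e rho (EPair e1 e2) (VPair v1 v2)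
| FE_fst rho e v1 v2 : fwd_e rho e (VPair v1 v2) -> fwd_e rho (EFst e) v1
| FE_snd rho e v1 v2 : fwd_e rho e (VPair v1 v2) -> fwd_e rho (ESnd e) v2
| FE_fst_hole rho e : fwd_e rho e VHole -> fwd_e rho (EFst e) VHole
| FE_snd_hole rho e : fwd_e rho e VHole -> fwd_e rho (ESnd e) VHole.

Inductive fwd_c : env -> store -> computation -> trace -> store -> result -> Prop :=
| F_TraceHole rho mu M k L :
    fwd_c rho mu M (THole k L) (erase mu L) (k, VHole)
| F_CompHole rho mu T :
    fwd_c rho mu CHole T (erase mu (writes T)) (outcome_of T, VHole)
| F_Ret rho mu e e' v :
    fwd_e rho e v -> fwd_c rho mu (CRet e) (TRet e') mu (Val, v)
| F_Let rho mu x M1 M2 T1 T2 mu' v mu'' R :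
    fwd_c rho mu M1 T1 mu' (Val, v) ->
    fwd_c (upd rho x v) mu' M2 T2 mu'' R ->
    fwd_c rho mu (CLet x M1 M2) (TLetS T1 x T2) mu'' R
| F_LetFail rho mu x M1 M2 T1 mu' v :
    fwd_c rho mu M1 T1 mu' (Exn, v) ->
    fwd_c rho mu (CLet x M1 M2) (TLetF T1) mu' (Exn, v)
| F_CaseL rho mu e x M1 y M2 e' T v mu' R :
    fwd_e rho e (VInl v) -> fwd_c (upd rho x v) mu M1 T mu' R ->
    fwd_c rho mu (CCase e x M1 y M2) (TCaseL e' x T y) mu' R
| F_CaseR rho mu e x M1 y M2 e' T v mu' R :
    fwd_e rho e (VInr v) -> fwd_c (upd rho y v) mu M2 T mu' R ->
    fwd_c rho mu (CCase e x M1 y M2) (TCaseR e' x y T) mu' R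
| F_CaseLHole rho mu e x M1 y M2 e' T :
    fwd_e rho e VHole ->
    fwd_c rho mu (CCase e x M1 y M2) (TCaseL e' x T y)
          (erase mu (writes T)) (outcome_of T, VHole)
| F_CaseRHole rho mu e x M1 y M2 e' T :
    fwd_e rho e VHole ->
    fwd_c rho mu (CCase e x M1 y M2) (TCaseR e' x y T)
          (erase mu (writes T)) (outcome_of T, VHole)
| F_App rho mu e1 e2 e1' e2' f x T v1 rho' M v2 mu' R :
    fwd_e rho e1 v1 -> v1 = VClos rho' f x M -> fwd_e rho e2 v2 ->
    fwd_c (upd (upd rho' f v1) x v2) mu M T mu' R ->
    fwd_c rho mu (CApp e1 e2) (TApp e1' e2' f x T) mu' R
| F_AppHole rho mu e1 e2 e1' e2' f x T :
    fwd_e rho e1 VHole ->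
    fwd_c rho mu (CApp e1 e2) (TApp e1' e2' f x T)
          (erase mu (writes T)) (outcome_of T, VHole)
| F_Raise rho mu e e' v :
    fwd_e rho e v -> fwd_c rho mu (CRaise e) (TRaise e') mu (Exn, v)
| F_Try rho mu M1 x M2 T1 mu' v :
    fwd_c rho mu M1 T1 mu' (Val, v) ->
    fwd_c rho mu (CTry M1 x M2) (TTryS T1) mu' (Val, v)
| F_TryFail rho mu M1 x M2 T1 T2 mu' v mu'' R :
    fwd_c rho mu M1 T1 mu' (Exn, v) ->
    fwd_c (upd rho x v) mu' M2 T2 mu'' R ->
    fwd_c rho mu (CTry M1 x M2) (TTryF T1 x T2) mu'' R
| F_Ref rho mu e l e' v :
    fwd_e rho e v -> fwd_c rho mu (CRef e) (TRef l e') (upd mu l v) (Val, VLoc l)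
| F_Assign rho mu e1 e2 l e1' e2' v :
    fwd_e rho e1 (VLoc l) -> fwd_e rho e2 v ->
    fwd_c rho mu (CAssign e1 e2) (TAssign l e1' e2') (upd mu l v) (Val, VUnit)
| F_AssignHole rho mu e1 e2 l e1' e2' :
    fwd_e rho e1 VHole ->
    fwd_c rho mu (CAssign e1 e2) (TAssign l e1' e2') (upd mu l VHole) (Val, VHole)
| F_Deref rho mu e l e' :
    fwd_e rho e (VLoc l) -> fwd_c rho mu (CDeref e) (TDeref l e') mu (Val, mu l)
| F_DerefHole rho mu e l e' :
    fwd_e rho e VHole -> fwd_c rho mu (CDeref e) (TDeref l e') mu (Val, VHole).

Definition fwd (c : config) (o : output) : Prop :=
  let '(rho, mu, M, T) := c in fwd_c rho mu M T o.1 o.2.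

From mathcomp Require Import all_boot finmap.
From Stdlib Require Import FunctionalExtensionality.

Set Implicit Arguments.
Unset Strict Implicit.
Unset Printing Implicit Defensive.

Local Open Scope fset_scope.

(* Induction on the evaluation, analysing both slices at once.  If either
   configuration has a hole at the top of its computation or trace, its slice
   erases exactly the locations written by the trace and returns a hole, while
   the other slice leaves every other location unchanged; so the meet of the
   two outputs is again "erase and return a hole", which is the slice of the
   meet configuration.  The same argument covers the rules whose scrutinee
   slices to a hole.  Otherwise both slices use the same rule and the meet
   commutes with each premise.  The induction hypotheses apply to the premises
   because slicing a prefix yields a prefix of the evaluation result, so the
   values bound by let, case, try and application (closure bodies included)
   stay below a common upper bound. *)

Lemma vmeet_hole_r v : vmeet v VHole = VHole. Proof. by case: v. Qed.
Lemma emeet_hole_r e : emeet e EHole = EHole. Proof. by case: e. Qed.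
Lemma cmeet_hole_r M : cmeet M CHole = CHole. Proof. by case: M. Qed.

Lemma mmeet_upd (m m' : nat -> value) a v v' :
  mmeet (upd m a v) (upd m' a v') = upd (mmeet m m') a (vmeet v v').
Proof. by apply: functional_extensionality => b; rewrite /mmeet /upd; case: (b == a). Qed.

Lemma upd_neq (m : nat -> value) a v b : b != a -> upd m a v b = m b.
Proof. by rewrite /upd => /negbTE ->. Qed.

Lemma erase_notin (mu : store) L l : l \notin L -> erase mu L l = mu l.
Proof. by rewrite /erase => /negbTE ->. Qed.

Lemma mleq_upd (m m' : nat -> value) a v v' :
  mleq m m' -> vleq v v' -> mleq (upd m a v) (upd m' a v').
Proof. by move=> Hm Hv b; rewrite /upd; case: (b == a). Qed.

Lemma vleq_closE r r' f f' x x' M M' :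
  vleq (VClos r f x M) (VClos r' f' x' M') -> mleq r r' /\ cleq M M'.
Proof. by move=> H; inversion H. Qed.

Lemma tleq_writes U T : tleq U T -> writes U = writes T.
Proof. by elim=> //= *; congruence. Qed.

Lemma tleq_outcome U T : tleq U T -> outcome_of U = outcome_of T.
Proof. by elim=> //= *; congruence. Qed.

Lemma tmeet_writes_outcome U1 U2 T : tleq U1 T -> tleq U2 T ->
  writes (tmeet U1 U2) = writes T /\ outcome_of (tmeet U1 U2) = outcome_of T.
Proof.
move=> H1; move: U2; induction H1; move=> U2 H2; inversion H2; subst => //=; rewrite ?eqxx /=;
  repeat match goal with
  | IH : forall U, tleq U ?T -> _, H : tleq ?U' ?T |- _ => have [] := IH _ H; clear IH
  end; by intuition congruence.
Qed.

Lemma fwd_c_outcome r s M T s' Q : fwd_c r s M T s' Q -> Q.1 = outcome_of T.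
Proof. by elim. Qed.

Lemma fwd_c_frame r s M T s' Q :
  fwd_c r s M T s' Q -> forall l, l \notin writes T -> s' l = s l.
Proof.
elim=> {r s M T s' Q} /=; intros;
  repeat match goal with
  | H : is_true (_ \notin _ `|` _) |- _ => move: H; rewrite in_fsetU negb_or => /andP[? ?]
  end;
  rewrite ?erase_notin ?upd_neq -?in_fset1 //; by eauto using eq_trans.
Qed.

Lemma fwd_e_det r e v v' : fwd_e r e v -> fwd_e r e v' -> v' = v.
Proof.
move=> H; elim: H v' => {r e v}; intros until v'; move=> H'; inversion H'; subst => //;
  repeat match goal with
  | IH : forall w, fwd_e ?r ?e w -> w = _, H : fwd_e ?r ?e _ |- _ =>
      have := IH _ H; clear IH H; case=> *
  end; by subst.
Qed.

Lemma fwd_c_det r s M T s1 Q1 s2 Q2 :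
  fwd_c r s M T s1 Q1 -> fwd_c r s M T s2 Q2 -> s2 = s1 /\ Q2 = Q1.
Proof.
move=> H; elim: H s2 Q2 => {r s M T s1 Q1}; intros until Q2; move=> H'; inversion H'; subst => //;
  repeat match goal with
  | H1 : fwd_e ?r ?e _, H2 : fwd_e ?r ?e _ |- _ =>
      have := fwd_e_det H1 H2; clear H2; case=> *; subst
  | IH : forall s' Q', fwd_c ?r ?s ?M ?T s' Q' -> s' = _ /\ Q' = _,
    H : fwd_c ?r ?s ?M ?T _ _ |- _ =>
      have [? E] := IH _ _ H; clear IH H; try (case: E => * ); subst
  end; done.
Qed.

Lemma eval_e_fwd_e rho e v : eval_e rho e v -> fwd_e rho e v.
Proof. by elim=> *; econstructor; eauto. Qed.

Lemma eval_c_fwd_c T rho mu M mu' R : eval_c T rho mu M mu' R -> fwd_c rho mu M T mu' R.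
Proof. by elim=> *; subst; econstructor; eauto using eval_e_fwd_e. Qed.

Definition hole_at_top (M : computation) (T : trace) : bool :=
  if T is THole _ _ then true else if M is CHole then true else false.

Lemma fwd_c_hole_at_top r s M T :
  hole_at_top M T -> fwd_c r s M T (erase s (writes T)) (outcome_of T, VHole).
Proof.
case: M; last by move=> _; exact: F_CompHole.
all: by case: T => // k L *; exact: F_TraceHole.
Qed.

Lemma fwd_c_hole_at_topE r s M T s' Q : hole_at_top M T -> fwd_c r s M T s' Q ->
  s' = erase s (writes T) /\ Q = (outcome_of T, VHole).
Proof. by move=> /(fwd_c_hole_at_top r s) F0 /(fwd_c_det F0). Qed.

Lemma hole_at_top_meet M1 T1 M2 T2 :
  hole_at_top M1 T1 || hole_at_top M2 T2 -> hole_at_top (cmeet M1 M2) (tmeet T1 T2).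
Proof.
case/orP.
- by case: T1 => //; case: M1 => // *; case: (tmeet _ T2).
- by case: T2 => //; [case: M2 => // *; rewrite cmeet_hole_r; case: (tmeet T1 _)..|case: T1].
Qed.

Lemma fwd_e_leq_eval rho e v r e1 v1 :
  eval_e rho e v -> mleq r rho -> eleq e1 e -> fwd_e r e1 v1 -> vleq v1 v.
Proof.
move=> E; elim: E r e1 v1 => {rho e v} [rho x|rho|rho f x M|rho e v _ IH|rho e v _ IH
  |rho e1 e2 v1 v2 _ IH1 _ IH2|rho e v1 v2 _ IH|rho e v1 v2 _ IH] r a w Hr He F;
  inversion He; subst; inversion F; subst; try constructor; eauto.
all: have H := IH _ _ _ Hr ltac:(eassumption) ltac:(eassumption); by inversion H.
Qed.

Lemma erase_leq_eval T rho mu M mu' R s U :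
  eval_c T rho mu M mu' R -> mleq s mu -> tleq U T ->
  mleq (erase s (writes U)) mu' /\ rleq (outcome_of U, VHole) R.
Proof.
move=> /eval_c_fwd_c F Hs HU; rewrite (tleq_writes HU) (tleq_outcome HU); split.
- move=> l; rewrite /erase; case: ifP => Hl; first exact: vleq_hole.
  by rewrite (fwd_c_frame F) ?Hl.
- by split; [rewrite (fwd_c_outcome F) | exact: vleq_hole].
Qed.

Ltac invert_vleq :=
  repeat match goal with
  | H : vleq (VInl _) (VInl _) |- _ => inversion H; subst; clear H
  | H : vleq (VInr _) (VInr _) |- _ => inversion H; subst; clear H
  | H : vleq (VClos _ _ _ _) (VClos _ _ _ _) |- _ => case/vleq_closE: H => ? ?
  end.

Lemma fwd_c_leq_eval T rho mu M mu' R r s N U s' Q :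
  eval_c T rho mu M mu' R -> mleq r rho -> mleq s mu -> cleq N M -> tleq U T ->
  fwd_c r s N U s' Q -> mleq s' mu' /\ rleq Q R.
Proof.
move=> E Hr Hs HN HU F; elim: F T rho mu M mu' R E Hr Hs HN HU => {r s N U s' Q}; intros;
  try match goal with
  | E : eval_c _ _ _ _ _ _, Hs : mleq ?s _, HU : tleq ?U _ |- mleq (erase ?s _) _ /\ _ =>
      exact: erase_leq_eval E Hs HU
  end.
all: inversion HN; subst; inversion HU; subst; inversion E; subst.
all: repeat match goal with
  | F : fwd_e ?r ?a ?w, E : eval_e ?rho ?b ?v, L : eleq ?a ?b, Hr : mleq ?r ?rho |- _ =>
      have := fwd_e_leq_eval E Hr L F; clear F; move=> ?
  end; invert_vleq.
all: repeat match goal with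
  | IH : forall T rho mu M mu' R, eval_c T rho mu M mu' R -> _, E : eval_c _ _ _ _ _ _ |- _ =>
      have [? [? ?]] := IH _ _ _ _ _ _ E ltac:(eauto using mleq_upd, vleq_clos)
        ltac:(eauto) ltac:(eauto) ltac:(eauto); clear IH
  end.
all: by split; [eauto using mleq_upd, vleq | split; [done | eauto using vleq]].
Qed.

Lemma fwd_e_meet r1 r2 e1 e2 e v1 v2 : eleq e1 e -> eleq e2 e ->
  fwd_e r1 e1 v1 -> fwd_e r2 e2 v2 -> fwd_e (mmeet r1 r2) (emeet e1 e2) (vmeet v1 v2).
Proof.
move=> H1 H2 F1; elim: F1 e2 v2 e H1 H2 => {r1 e1 v1}
  [r1|r1 x|r1|r1 f x M|r1 a v _ IH|r1 a v _ IH|r1 a1 a2 w1 w2 _ IH1 _ IH2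
  |r1 a p q _ IH|r1 a p q _ IH|r1 a _ IH|r1 a _ IH] e2 v2 e H1 H2 F2; first exact: FE_hole.
all: inversion H1; subst; inversion H2; subst;
  inversion F2; subst; rewrite /= ?eqxx ?emeet_hole_r ?vmeet_hole_r; try constructor; eauto.
all: have /= := IH _ _ _ ltac:(eassumption) ltac:(eassumption) ltac:(eassumption);
  rewrite ?vmeet_hole_r; eauto using fwd_e.
Qed.

Lemma mmeet_erase_l (s1 s2 s2' : store) W :
  (forall l, l \notin W -> s2' l = s2 l) -> mmeet (erase s1 W) s2' = erase (mmeet s1 s2) W.
Proof.
move=> Hfr; apply: functional_extensionality => l; rewrite /mmeet /erase.
by case: ifP => Hl //; rewrite Hfr ?Hl.
Qed.

Lemma mmeet_erase_r (s1 s1' s2 : store) W :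
  (forall l, l \notin W -> s1' l = s1 l) -> mmeet s1' (erase s2 W) = erase (mmeet s1 s2) W.
Proof.
move=> Hfr; apply: functional_extensionality => l; rewrite /mmeet /erase.
by case: ifP => Hl; [exact: vmeet_hole_r | rewrite Hfr ?Hl].
Qed.

Lemma out_meet_hole T a1 s1 N1 U1 s1' Q1 a2 s2 N2 U2 s2' Q2 :
  tleq U1 T -> tleq U2 T -> fwd_c a1 s1 N1 U1 s1' Q1 -> fwd_c a2 s2 N2 U2 s2' Q2 ->
  (s1' = erase s1 (writes U1) /\ Q1 = (outcome_of U1, VHole)) \/
  (s2' = erase s2 (writes U2) /\ Q2 = (outcome_of U2, VHole)) ->
  mmeet s1' s2' = erase (mmeet s1 s2) (writes (tmeet U1 U2)) /\
  rmeet Q1 Q2 = (outcome_of (tmeet U1 U2), VHole).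
Proof.
move=> HU1 HU2 F1 F2; have [-> ->] := tmeet_writes_outcome HU1 HU2.
have frame1 := fwd_c_frame F1; have frame2 := fwd_c_frame F2.
rewrite (tleq_writes HU1) (tleq_outcome HU1) in frame1 *.
rewrite (tleq_writes HU2) (tleq_outcome HU2) in frame2 *.
case=> [[-> ->]|[-> ->]]; split => //.
- exact: mmeet_erase_l frame2.
- exact: mmeet_erase_r frame1.
- by rewrite /rmeet vmeet_hole_r (fwd_c_outcome F1) (tleq_outcome HU1).
Qed.

Lemma fwd_c_meet_hole T a1 s1 N1 U1 s1' Q1 a2 s2 N2 U2 s2' Q2 :
  tleq U1 T -> tleq U2 T -> fwd_c a1 s1 N1 U1 s1' Q1 -> fwd_c a2 s2 N2 U2 s2' Q2 ->
  hole_at_top N1 U1 || hole_at_top N2 U2 ->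
  fwd_c (mmeet a1 a2) (mmeet s1 s2) (cmeet N1 N2) (tmeet U1 U2) (mmeet s1' s2') (rmeet Q1 Q2).
Proof.
move=> HU1 HU2 F1 F2 Hh; case: (out_meet_hole HU1 HU2 F1 F2) => [|-> ->].
  by case/orP: Hh => /fwd_c_hole_at_topE H; [left; exact: H F1 | right; exact: H F2].
exact: fwd_c_hole_at_top (hole_at_top_meet Hh).
Qed.

Lemma rmeet_pair k v k' v' : rmeet (k, v) (k', v') = (k, vmeet v v').
Proof. by []. Qed.

Ltac meet_hole :=
  match goal with
  | H1 : tleq ?U1 ?T, H2 : tleq ?U2 ?T, F1 : fwd_c _ _ ?N1 ?U1 _ _, F2 : fwd_c _ _ ?N2 ?U2 _ _
    |- fwd_c _ _ (cmeet ?N1 ?N2) (tmeet ?U1 ?U2) _ _ =>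
      apply: (fwd_c_meet_hole H1 H2 F1 F2); by rewrite /= ?orbT
  end.

Ltac meet_value_hole :=
  match goal with
  | H1 : tleq ?U1 ?T, H2 : tleq ?U2 ?T, F1 : fwd_c _ _ _ ?U1 _ _, F2 : fwd_c _ _ _ ?U2 _ _
    |- fwd_c _ _ _ (tmeet ?U1 ?U2) _ _ =>
      case: (out_meet_hole H1 H2 F1 F2) => [|-> ->]; first by [left | right]
  end.

Ltac bound := solve [eauto using mleq_upd, vleq_clos].

Ltac invert_prefixes HU1 HU2 HN1 HN2 F1 F2 :=
  inversion HU1; subst; try meet_hole; inversion HU2; subst; try meet_hole;
  inversion HN1; subst; try meet_hole; inversion HN2; subst; try meet_hole;
  inversion F1; subst; inversion F2; subst; try meet_value_hole.

Ltac add_expr_meets :=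
  repeat match goal with
  | H1 : fwd_e ?r1 ?x _, H2 : fwd_e ?r2 ?y _, L1 : eleq ?x ?z, L2 : eleq ?y ?z
    |- fwd_c (mmeet ?r1 ?r2) _ _ _ _ _ =>
      lazymatch goal with
      | _ : fwd_e (mmeet r1 r2) (emeet x y) _ |- _ => fail
      | _ => have := fwd_e_meet L1 L2 H1 H2; move=> ?
      end
  end.

Ltac add_upper_bounds :=
  repeat match goal with
  | F : fwd_e ?r ?a ?w, E : eval_e ?rho ?b ?v, L : eleq ?a ?b, Hr : mleq ?r ?rho |- _ =>
      lazymatch goal with
      | _ : vleq w v |- _ => fail
      | _ => have := fwd_e_leq_eval E Hr L F; move=> ?
      end
  end;
  invert_vleq;
  repeat match goal with
  | G : fwd_c ?r ?s ?N ?U ?s' ?Q, E : eval_c ?T ?rho ?mu ?M ?mu' ?R,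
    LN : cleq ?N ?M, LU : tleq ?U ?T |- _ =>
      lazymatch goal with
      | _ : mleq s' mu' |- _ => fail
      (* explicit arguments: the [ltac:] bounds are solved before [G] could fix [r], [s] *)
      | _ => have [? [? ?]] := @fwd_c_leq_eval T rho mu M mu' R r s N U s' Q E
               ltac:(bound) ltac:(bound) LN LU G
      end
  end.

Ltac apply_meet_IH :=
  repeat match goal with
  | IH : forall a1 s1 N1 U1 s1' Q1 a2 s2 N2 U2 s2' Q2, mleq a1 _ -> _,
    G1 : fwd_c ?ra ?sa ?Na ?Ua ?sa' ?Qa, G2 : fwd_c ?rb ?sb ?Nb ?Ub ?sb' ?Qb |- _ =>
      lazymatch goal with
      | _ : fwd_c (mmeet ra rb) (mmeet sa sb) (cmeet Na Nb) (tmeet Ua Ub) _ _ |- _ => fail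
      | _ => have := IH ra sa Na Ua sa' Qa rb sb Nb Ub sb' Qb ltac:(bound) ltac:(bound)
               ltac:(bound) ltac:(bound) ltac:(bound) ltac:(bound) ltac:(bound) ltac:(bound)
               G1 G2; move=> ?
      end
  end.

Ltac simplify_meets :=
  rewrite /= ?eqxx /= ?mmeet_upd ?vmeet_hole_r ?rmeet_pair /= ?eqxx;
  repeat match goal with
  | H : fwd_c (mmeet (upd _ _ _) (upd _ _ _)) _ _ _ _ _ |- _ =>
      move: H; rewrite !mmeet_upd /= ?eqxx /= => H
  | H : fwd_e _ _ (vmeet _ VHole) |- _ => rewrite vmeet_hole_r in H
  | H : fwd_e _ _ (vmeet (VClos _ _ _ _) (VClos _ _ _ _)) |- _ =>
      move: H; rewrite /= !eqxx /= => H
  | H : fwd_e _ _ (vmeet (VLoc _) (VLoc _)) |- _ => move: H; rewrite /= !eqxx /= => H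
  end.

Lemma fwd_c_meet T rho mu M mu' R a1 s1 N1 U1 s1' Q1 a2 s2 N2 U2 s2' Q2 :
  eval_c T rho mu M mu' R ->
  mleq a1 rho -> mleq s1 mu -> cleq N1 M -> tleq U1 T ->
  mleq a2 rho -> mleq s2 mu -> cleq N2 M -> tleq U2 T ->
  fwd_c a1 s1 N1 U1 s1' Q1 -> fwd_c a2 s2 N2 U2 s2' Q2 ->
  fwd_c (mmeet a1 a2) (mmeet s1 s2) (cmeet N1 N2) (tmeet U1 U2) (mmeet s1' s2') (rmeet Q1 Q2).
Proof.
move=> E; elim: E a1 s1 N1 U1 s1' Q1 a2 s2 N2 U2 s2' Q2 => {T rho mu M mu' R};
  intros until Q2; move=> Ha1 Hs1 HN1 HU1 Ha2 Hs2 HN2 HU2 F1 F2.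
all: invert_prefixes HU1 HU2 HN1 HN2 F1 F2.
all: add_expr_meets; add_upper_bounds; apply_meet_IH; simplify_meets.
all: solve [eauto using fwd_c | eapply F_Deref; eassumption].
Qed.

Theorem lemma4p4 (rho : env) (mu1 : store) (M : computation) (T : trace)
    (mu2 : store) (R : result) :
  map_holefree rho -> map_holefree mu1 -> comp_holefree M ->
  eval_c T rho mu1 M mu2 R ->
  forall (c c' : config),
    cfg_leq c (rho, mu1, M, T) -> cfg_leq c' (rho, mu1, M, T) ->
    forall (o o' : output), fwd c o -> fwd c' o' ->
      fwd (cfg_meet c c') (out_meet o o') /\
      (forall o'' : output, fwd (cfg_meet c c') o'' -> o'' = out_meet o o').
Proof.
move=> _ _ _ E [[[a1 s1] N1] U1] [[[a2 s2] N2] U2] [Ha1 [Hs1 [HN1 HU1]]] [Ha2 [Hs2 [HN2 HU2]]]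
  [s1' Q1] [s2' Q2] /= F1 F2.
have F := fwd_c_meet E Ha1 Hs1 HN1 HU1 Ha2 Hs2 HN2 HU2 F1 F2.
by split=> // -[s Q] /= /(fwd_c_det F) [-> ->].
Qed.
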